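(* Let $p$ be a prime and let $\Gamma$ be a finite connected $G$-arc-transitive graph of prime valency $p$, with $G\leqslant\mathrm{Aut}(\Gamma)$ acting quasiprimitively or biquasiprimitively on $\mathrm V(\Gamma)$. Suppose that either (a) $\Gamma=\mathrm K_{12}$, $G=\mathrm M_{11}$ and $p=11$; or (b) $|\mathrm V(\Gamma)|=(p^2-1)/2s$ and $G=\mathrm{PSL}_2(p)$ or $\mathrm{PGL}_2(p)$, where $p$ is a Mersenne prime and $\mathrm C_r\leqslant \mathrm C_s<\mathrm C_{(p-1)/2}$, with $r$ the product of the distinct prime divisors of $(p-1)/2$. Then $\Gamma$ contains a triangle.
   Context: A graph is $G$-arc-transitive if $G$ acts transitively on its arcs. A permutation group is quasiprimitive if every nontrivial normal subgroup is transitive, and biquasiprimitive if it is not quasiprimitive and every nontrivial normal subgroup has at most two orbits. $\mathrm C_n$ denotes the cyclic group of order $n$. A triangle is a set of three pairwise adjacent vertices. *)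

From mathcomp Require Import all_boot all_order all_algebra all_fingroup all_solvable.
Set Implicit Arguments. Unset Strict Implicit. Unset Printing Implicit Defensive.
Import GRing.Theory.

Local Open Scope group_scope.

(* A finite simple graph: vertex type T : finType, symmetric irreflexive e. *)

Definition is_aut_group (T : finType) (e : rel T) (G : {set {perm T}}) :=
  forall g, g \in G -> forall x y, e (g x) (g y) = e x y.

Definition connected_graph (T : finType) (e : rel T) :=
  forall x y : T, connect e x y.

Definition regular_of_valency (T : finType) (e : rel T) (k : nat) :=
  forall x : T, #|[set y | e x y]| = k.

Definition arc_transitive (T : finType) (e : rel T) (G : {set {perm T}}) :=
  forall x y x' y', e x y -> e x' y' ->
    exists2 g, g \in G & g x = x' /\ g y = y'.

Definition quasiprimitive (T : finType) (G : {group {perm T}}) :=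
  forall N : {group {perm T}}, N <| G -> N :!=: 1 ->
    [transitive N, on [set: T] | 'P].

Definition norbits (T : finType) (N : {set {perm T}}) :=
  #|[set orbit 'P N x | x : T]|.

Definition biquasiprimitive (T : finType) (G : {group {perm T}}) :=
  ~ quasiprimitive G /\
  forall N : {group {perm T}}, N <| G -> N :!=: 1 -> norbits N <= 2.

Definition has_triangle (T : finType) (e : rel T) :=
  exists x y z : T, [&& e x y, e y z & e x z].

Definition is_complete_graph (T : finType) (e : rel T) (n : nat) :=
  #|T| = n /\ forall x y : T, x != y -> e x y.

(* Mathieu group M11 = < (1 2 ... 11), (3 7 11 8)(4 10 5 6) > on 11 points
   (points 1..11 are encoded as 0..10). *)
Definition o11 (k : nat) : 'I_11 := inord k.
(* with mathcomp's convention (s * t) x = t (s x),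
   tperm c0 c1 * tperm c0 c2 * ... * tperm c0 cm is the cycle (c0 c1 ... cm) *)
Definition cyc (c0 : 'I_11) (cs : seq 'I_11) : {perm 'I_11} :=
  foldl (fun s c => s * tperm c0 c) 1 cs.
Definition M11_a : {perm 'I_11} :=
  cyc (o11 0) [seq o11 k | k <- iota 1 10].
Definition M11_b : {perm 'I_11} :=
  cyc (o11 2) [:: o11 6; o11 10; o11 7] * cyc (o11 3) [:: o11 9; o11 4; o11 5].
Definition M11 : {set {perm 'I_11}} := <<[set M11_a; M11_b]>>.

Definition SL2 (p : nat) : {set {'GL_2(p)}} :=
  [set g : {'GL_2(p)} | (\det (GLval g) == 1)%R].
Definition PSL2 (p : nat) := SL2 p / 'Z(SL2 p).
Definition PGL2 (p : nat) := 'GL_2(p) / 'Z('GL_2(p)).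

Definition mersenne_prime (p : nat) := prime p /\ exists k, p = 2 ^ k - 1.

Definition prod_distinct_primes (n : nat) : nat := \prod_(q <- primes n) q.

(* In case (b), G is the image of a representation rho of
   D = SL_2(p) or GL_2(p) with kernel Z(D). Since p^2 does not divide |G| while p divides
   every vertex stabiliser, the unipotent group U = {[1 t; 0 1]} fixes a vertex v, and no
   element of order p fixes an arc. If g in D has determinant 1 and moves v to a
   neighbour w, then g is not upper triangular (otherwise g normalises U, which would fix
   the arc vw), so the Bruhat identity g u = u' g u'' g with u, u', u'' in U makes
   v, w, rho u w a triangle. For SL_2(p) every lift has determinant 1. For GL_2(p) with
   p a Mersenne prime, p = 3 mod 4, so every determinant is a square or minus a square;
   moreover |G_v| = 2sp with 2s < p makes rho U normal in G_v, so an involution of G_v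
   lifts to an upper triangular matrix whose determinant is minus a square, and this
   corrects the determinant of the lift of g. *)

From mathcomp Require Import all_boot all_order all_algebra all_fingroup all_solvable all_field.
From mathcomp Require Import ring zify.
Set Implicit Arguments. Unset Strict Implicit. Unset Printing Implicit Defensive.
Import GRing.Theory.
Local Open Scope group_scope.

Section Matrix22.
Local Open Scope ring_scope.
Variable F : fieldType.

Definition mx22 (a b c d : F) : 'M[F]_2 :=
  \matrix_(i < 2, j < 2)
    if i == 0 :> nat then (if j == 0 :> nat then a else b)
    else (if j == 0 :> nat then c else d).

Lemma mx22P (A : 'M[F]_2) : exists a b c d, A = mx22 a b c d.
Proof.
exists (A 0 0), (A 0 1), (A 1 0), (A 1 1); apply/matrixP => i j; rewrite !mxE.
by case: i => [[|[|i]] Hi] //; case: j => [[|[|j]] Hj] //=; congr (A _ _); apply: val_inj.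
Qed.

Lemma mulmx22 (a b c d a' b' c' d' : F) :
  mx22 a b c d *m mx22 a' b' c' d' =
  mx22 (a * a' + b * c') (a * b' + b * d') (c * a' + d * c') (c * b' + d * d').
Proof.
apply/matrixP => i j; rewrite !mxE !big_ord_recl big_ord0 !mxE /=.
by case: i => [[|[|i]] Hi] //; case: j => [[|[|j]] Hj] //=; rewrite addr0.
Qed.

Lemma det_mx22 (a b c d : F) : \det (mx22 a b c d) = a * d - b * c.
Proof.
rewrite (expand_det_row _ 0) !big_ord_recl big_ord0 /cofactor !mxE /=.
by rewrite !det_mx11 !mxE /= /bump /= expr0 expr1; ring.
Qed.

Lemma mx22_inj (a b c d a' b' c' d' : F) :
  mx22 a b c d = mx22 a' b' c' d' -> [/\ a = a', b = b', c = c' & d = d'].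
Proof.
move=> /(congr1 (fun M : 'M[F]_2 => (M 0 0, M 0 1, M 1 0, M 1 1))).
by rewrite !mxE /= => -[].
Qed.

Lemma scalar_mx22 (k : F) : k%:M = mx22 k 0 0 k.
Proof.
apply/matrixP => i j; rewrite !mxE.
by case: i => [[|[|i]] Hi] //; case: j => [[|[|j]] Hj].
Qed.

Lemma mx22_central (a b c d : F) :
  mx22 1 1 0 1 *m mx22 a b c d = mx22 a b c d *m mx22 1 1 0 1 ->
  mx22 1 0 1 1 *m mx22 a b c d = mx22 a b c d *m mx22 1 0 1 1 ->
  [/\ b = 0, c = 0 & d = a].
Proof.
rewrite !mulmx22 => /mx22_inj[e1 e2 _ _] /mx22_inj[e3 _ _ _].
move: e1 e2 e3; rewrite !(mulr1, mulr0, addr0, mul1r, mul0r, add0r).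
move=> e1 e2 e3; split.
- by rewrite -(addKr a b) -e3 addNr.
- by rewrite -(addKr a c) e1 addNr.
- by apply: (@addIr _ b); rewrite addrC e2.
Qed.

Lemma mx22_normalizing_unip_upper (a b c d l k : F) :
  mx22 1 1 0 1 *m mx22 a b c d = mx22 a b c d *m (mx22 l 0 0 l *m mx22 1 k 0 1) ->
  c = 0.
Proof.
rewrite !mulmx22 => /mx22_inj[e1 _ e3 _].
move: e1 e3; rewrite !(mulr1, mulr0, addr0, mul1r, mul0r, add0r) => e1 e3.
have [//|cn0] := eqVneq c 0.
have l1 : l = 1 by apply: (mulIf cn0); rewrite mul1r mulrC -e3.
by rewrite -(addKr a c) e1 l1 mulr1 addNr.
Qed.

Lemma upper_mx22_sqr_scalar (a b d l : F) :
  mx22 a b 0 d *m mx22 a b 0 d = mx22 l 0 0 l -> (b = 0 /\ d = a) \/ d = - a.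
Proof.
rewrite !mulmx22 => /mx22_inj[e1 e2 _ e4].
move: e1 e2 e4; rewrite !(mulr1, mulr0, addr0, mul1r, mul0r, add0r) => e1 e2 e4.
have [ad0|adn0] := eqVneq (a + d) 0; first by right; rewrite -(addKr a d) ad0 addr0.
have b0 : b = 0 by apply: (mulIf adn0); rewrite mul0r -e2; ring.
left; split=> //; apply/eqP; rewrite eq_sym -subr_eq0.
have : (a - d) * (a + d) == 0 by rewrite (_ : _ * _ = a * a - d * d); [rewrite e1 e4 subrr | ring].
by rewrite mulf_eq0 (negbTE adn0) orbF.
Qed.

Lemma upper_mx22_unip (a b d : F) : d != 0 ->
  mx22 a b 0 d *m mx22 1 1 0 1 = mx22 1 (a / d) 0 1 *m mx22 a b 0 d.
Proof. by move=> dn0; rewrite !mulmx22; congr mx22; field. Qed.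

Lemma mx22_bruhat (a b c d : F) : c != 0 -> a * d - b * c = 1 ->
  mx22 a b c d *m mx22 1 (- c^-1) 0 1 =
  mx22 1 c^-1 0 1 *m mx22 a b c d *m mx22 1 ((1 - a - d) / c) 0 1 *m mx22 a b c d.
Proof.
move=> cn0 det1; have -> : b = (a * d - 1) / c by rewrite -det1; field.
by rewrite !mulmx22; congr mx22; field.
Qed.

End Matrix22.

Section GL2.
Variable F : finFieldType.
Implicit Types (a s t : F) (g h : {'GL_2[F]}) (D : {group {'GL_2[F]}}).

Definition GLmx (A : 'M[F]_2) : {'GL_2[F]} := insubd (1 : {'GL_2[F]}) A.

Lemma GLmxE (A : 'M[F]_2) : (\det A != 0)%R -> GLval (GLmx A) = A.
Proof. by move=> detA; rewrite /GLmx val_insubd unitmxE unitfE detA. Qed.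

Lemma GLval_inj : injective (@GLval 2 F).
Proof. exact: val_inj. Qed.

Lemma in_GL2 g : g \in 'GL_2[F].
Proof. exact: in_setT. Qed.

(* In group_scope a bare [1 : F] is the unit of the additive group of F, i.e. 0%R;
   hence the explicit [unip 1%R] below. *)
Definition unip t := locked (GLmx (mx22 1 t 0 1)).
Definition lunip := locked (GLmx (mx22 1 0 1 1)).
Definition scalGL a := locked (GLmx (mx22 a 0 0 a)).

Lemma unipE t : GLval (unip t) = mx22 1 t 0 1.
Proof. by rewrite /unip -lock GLmxE // det_mx22 mulr1 mulr0 subr0 oner_neq0. Qed.

Lemma lunipE : GLval lunip = mx22 1 0 1 1.
Proof. by rewrite /lunip -lock GLmxE // det_mx22 mulr1 mul0r subr0 oner_neq0. Qed.

Lemma scalGLE a : (a != 0)%R -> GLval (scalGL a) = mx22 a 0 0 a.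
Proof. by move=> an0; rewrite /scalGL -lock GLmxE // det_mx22 mulr0 subr0 mulf_neq0. Qed.

Lemma det_scalGL a : (a != 0 -> \det (GLval (scalGL a)) = a ^+ 2)%R.
Proof. by move=> an0; rewrite scalGLE // det_mx22 mulr0 subr0 expr2. Qed.

Lemma unipD s t : unip s * unip t = unip (s + t)%R.
Proof. by apply: GLval_inj; rewrite GL_MxE !unipE mulmx22; congr mx22; ring. Qed.

Lemma unip0 : unip 0%R = 1.
Proof. by apply: GLval_inj; rewrite unipE GL_1E -scalar_mx22. Qed.

Lemma unipX t n : unip t ^+ n = unip (t *+ n)%R.
Proof. by elim: n => [|n IH]; rewrite ?unip0 // expgSr IH unipD mulrSr. Qed.

Lemma upper_GL2_unip g a b d : GLval g = mx22 a b 0 d -> (d != 0)%R ->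
  g * unip 1%R = unip (a / d)%R * g.
Proof. by move=> gE dn0; apply: GLval_inj; rewrite !GL_MxE gE !unipE upper_mx22_unip. Qed.

Lemma GL2_bruhat g a b c d : GLval g = mx22 a b c d -> (c != 0)%R -> (a * d - b * c = 1)%R ->
  g * unip (- c^-1)%R = unip (c^-1)%R * g * unip ((1 - a - d) / c)%R * g.
Proof. by move=> gE cn0 detg; apply: GLval_inj; rewrite !GL_MxE gE !unipE mx22_bruhat. Qed.

Lemma center_GL2_scalar D h : unip 1%R \in D -> lunip \in D -> h \in 'Z(D) ->
  exists2 a, (a != 0)%R & h = scalGL a.
Proof.
move=> uD lD /setIP[_ /centP cDh].
have commE g : g \in D -> (GLval g *m GLval h = GLval h *m GLval g)%R.
  by move=> gD; have := congr1 (@GLval 2 F) (cDh g gD); rewrite !GL_MxE.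
have [a [b [c [d hE]]]] := mx22P (GLval h).
have := commE _ lD; have := commE _ uD; rewrite unipE lunipE hE.
move=> eu el; have [b0 c0 da] := mx22_central eu el; subst b c d.
have an0 : (a != 0)%R by have := GL_det h; rewrite hE det_mx22 mulr0 subr0 mulf_eq0 orbb.
by exists a => //; apply: GLval_inj; rewrite hE scalGLE.
Qed.

Lemma unip1_notin_center D : lunip \in D -> unip 1%R \notin 'Z(D).
Proof.
move=> lD; apply/negP => uZ.
have uD := subsetP (center_sub D) _ uZ.
have [a an0 /(congr1 (@GLval 2 _))] := center_GL2_scalar uD lD uZ.
by rewrite unipE scalGLE // => /mx22_inj[_ /eqP]; rewrite oner_eq0.
Qed.

Lemma scalGL_center a : (a != 0)%R -> scalGL a \in 'Z('GL_2[F]).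
Proof.
move=> an0; rewrite inE inE /=; apply/centP => g _.
by apply: GLval_inj; rewrite !GL_MxE scalGLE // -scalar_mx22 scalar_mxC.
Qed.

Lemma card_center_GL2 : #|'Z('GL_2[F])| = #|F|.-1.
Proof.
have -> : 'Z('GL_2[F]) = scalGL @: [set~ 0%R].
  apply/setP => h; apply/idP/imsetP => [hZ | [a]].
    have [a an0 ->] := center_GL2_scalar (in_GL2 _) (in_GL2 _) hZ.
    by exists a; rewrite ?in_setC1.
  by rewrite in_setC1 => an0 ->; apply: scalGL_center.
rewrite card_in_imset ?cardsC1 // => a b; rewrite !in_setC1 => an0 bn0.
by move/(congr1 (@GLval 2 _)); rewrite !scalGLE // => /mx22_inj[].
Qed.

Lemma card_PGL2 : #|'GL_2[F] : 'Z('GL_2[F])| = (#|F| * (#|F| ^ 2 - 1))%N.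
Proof.
have := Lagrange (center_sub 'GL_2[F]); rewrite card_center_GL2 card_GL_2.
have := card_finNzRing_gt1 F; case: #|F| => [|[|q]] // _.
rewrite !succnK => eq.
have -> : (q.+2 ^ 2 - 1 = q.+1 * q.+3)%N by rewrite -(exp1n 2) subn_sqr subn1 addn1.
by apply/eqP; rewrite -(eqn_pmul2l (ltn0Sn q)) eq; apply/eqP; ring.
Qed.

End GL2.

Arguments lunip {F}.

Section SL2.
Variable p : nat.

Lemma SL2_group_set : group_set (SL2 p).
Proof.
apply/group_setP; split=> [|x y]; first by rewrite inE GL_1E det1.
by rewrite !inE GL_ME det_mulmx => /eqP-> /eqP->; rewrite mulr1.
Qed.

Canonical SL2_group := Group SL2_group_set.

Lemma unip_SL2 (t : 'F_p) : unip t \in SL2 p.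
Proof. by rewrite inE unipE det_mx22 mulr1 mulr0 subr0. Qed.

Lemma lunip_SL2 : lunip \in SL2 p.
Proof. by rewrite inE lunipE det_mx22 mulr1 mul0r subr0. Qed.

End SL2.

Section FiniteField.
Local Open Scope ring_scope.

Lemma sqr_or_opp_sqr (F : finFieldType) (d : F) :
  (#|F| %% 4 = 3)%N -> exists x, d = x ^+ 2 \/ - d = x ^+ 2.
Proof.
move=> q3; have [->|dn0] := eqVneq d 0; first by exists 0; left; rewrite expr0n.
pose m := (#|F| %/ 4)%N; have qE : #|F| = (2 * (2 * m).+1).+1 by rewrite /m; lia.
have : (d ^+ (2 * m).+1) ^+ 2 = 1.
  by apply: (mulfI dn0); rewrite -exprM -exprS mulnC -qE expf_card mulr1.
have sqE : (d ^+ m.+1) ^+ 2 = d * d ^+ (2 * m).+1.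
  by rewrite -exprM -exprS; congr (_ ^+ _); lia.
move/eqP; rewrite sqrf_eq1 => /orP[]/eqP dm; exists (d ^+ m.+1); rewrite sqE dm.
  by left; rewrite mulr1.
by right; rewrite mulrN1.
Qed.

Lemma prime_card_pchar (F : finFieldType) p : prime p -> #|F| = p -> p \in [pchar F].
Proof. by move=> p_pr card_F; apply: (@card_finPcharP _ _ 1) p_pr; rewrite expn1. Qed.

Lemma prime_field_natr (F : finFieldType) p : prime p -> #|F| = p ->
  forall t : F, exists n, t = n%:R.
Proof.
move=> p_pr card_F t; have pF := prime_card_pchar p_pr card_F.
have natr_inj : injective (fun i : 'I_p => i%:R : F).
  suff le_inj (i j : 'I_p) : i%:R = j%:R :> F -> (i <= j)%N -> i = j.
    move=> i j eq_ij; case: (leqP i j) => [/(le_inj _ _ eq_ij) // | /ltnW].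
    by move/(le_inj _ _ (esym eq_ij)).
  move=> eq_ij le_ij; apply/val_inj/eqP; rewrite eqn_leq le_ij /= -subn_eq0.
  have : (p %| j - i)%N by rewrite (dvdn_pcharf pF) natrB // eq_ij subrr.
  by case: (posnP (j - i)) => // /dvdn_leq/[apply]; have := ltn_ord j; lia.
have /codomP[i ->] : t \in codom (fun i : 'I_p => i%:R : F).
  by apply: (inj_card_onto natr_inj); rewrite card_ord card_F.
by exists i.
Qed.

End FiniteField.

Lemma prime_sqr_ndvd_card_GL2 p : prime p -> ~~ (p ^ 2 %| p * p.-1 ^ 2 * p.+1)%N.
Proof.
move=> p_pr; have p_gt1 := prime_gt1 p_pr.
have ndvd_pred : ~~ (p %| p.-1) by rewrite gtnNdvd //; lia.
have ndvd_succ : ~~ (p %| p.+1) by rewrite -addn1 dvdn_addr // dvdn1 neq_ltn p_gt1 orbT.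
rewrite -mulnA expnS expn1 dvdn_pmul2l ?prime_gt0 // Euclid_dvdM // Euclid_dvdX //.
by rewrite andbT negb_or ndvd_pred.
Qed.

Lemma dvdn_double_sqr_pred p s :
  (p %% 2 = 1 -> s %| (p - 1) %/ 2 -> 2 * s %| p ^ 2 - 1)%N.
Proof.
move=> p_odd s_dvd; rewrite -(exp1n 2) subn_sqr dvdn_mulr //.
by rewrite (_ : p - 1 = 2 * ((p - 1) %/ 2))%N ?dvdn_pmul2l //; lia.
Qed.

Lemma mersenne_mod4 p : mersenne_prime p -> p %% 4 = 3.
Proof.
case=> p_pr [k pE]; subst p; case: k p_pr => [|[|k]]; rewrite ?expn0 ?expn1 // => _.
by rewrite !expnS mulnA; have := expn_gt0 2 k; lia.
Qed.

Lemma Sylow_normal_of_index_lt (gT : finGroupType) (p : nat) (H P : {group gT}) :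
  prime p -> p.-Sylow(H) P -> #|H : P| < p -> P <| H.
Proof.
move=> p_pr sylP ltHP; have sPH := pHall_sub sylP.
have sPN : P \subset 'N_H(P) by rewrite subsetI sPH normG.
have := card_Syl_mod H p_pr; rewrite (card_Syl sylP) modn_small.
  by move/eqP; rewrite indexg_eq1 subsetI subxx /normal sPH => /= ->.
by apply: leq_ltn_trans ltHP; rewrite dvdn_leq ?(indexgS H sPN) // indexg_gt0.
Qed.

Lemma isog_quotient_morphism (aT rT : finGroupType) (D K : {group aT}) (G : {group rT}) :
  K <| D -> G \isog D / K ->
  exists rho : {morphism D >-> rT}, rho @* D = G /\ 'ker rho = K.
Proof.
move=> nsKD; rewrite isog_sym => /isogP[f injf fG].
have nKD := normal_norm nsKD.
pose q := restrm nKD (coset K).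
have qD : q @* D = D / K by rewrite restrm_quotientE.
have kerq : 'ker q = K by rewrite ker_restrm ker_coset (setIidPr (normal_sub nsKD)).
have sDq : D \subset q @*^-1 (D / K) by rewrite -qD morphimGK // kerq normal_sub.
exists (restrm sDq (f \o q)); split; first by rewrite im_restrm morphim_comp qD.
rewrite ker_restrm ker_comp (ker_injm injf) -/(q) -/('ker q)%g kerq.
by apply/setIidPr; rewrite normal_sub.
Qed.

Section ArcTransitiveGraph.
Variables (p : nat) (T : finType) (e : rel T) (G : {group {perm T}}).
Hypotheses (p_pr : prime p) (e_reg : regular_of_valency e p).
Hypotheses (G_aut : is_aut_group e G) (G_arc : arc_transitive e G).

Lemma neighbour_exists v : exists w, e v w.
Proof.
have : [set w | e v w] != set0 by rewrite -card_gt0 e_reg prime_gt0.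
by case/set0Pn => w; rewrite inE; exists w.
Qed.

Lemma vertex_transitive v w : exists2 g, g \in G & g v = w.
Proof.
have [[v' evv'] [w' eww']] := (neighbour_exists v, neighbour_exists w).
by have [g gG [gv _]] := G_arc evv' eww'; exists g.
Qed.

Lemma orbit_stab_neighbours v w :
  e v w -> orbit 'P 'C_G[v | 'P] w = [set y | e v y].
Proof.
move=> evw; apply/setP => y; rewrite inE; apply/orbitP/idP.
  case=> g /setIP[gG /astab1P]; rewrite /= !apermE => gv <-.
  by rewrite -{1}gv G_aut.
move=> evy; have [g gG [gv gw]] := G_arc evw evy.
by exists g; rewrite /= ?apermE // inE gG; apply/astab1P; rewrite /= apermE.
Qed.

Lemma card_stab_vertex v w : e v w ->
  #|'C_G[v | 'P]| = (p * #|'C_('C_G[v | 'P])[w | 'P]|)%N.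
Proof.
move=> evw; have := card_orbit 'P 'C_G[v | 'P] w.
rewrite orbit_stab_neighbours // e_reg => ->.
by rewrite mulnC Lagrange // subsetIl.
Qed.

Lemma prime_dvd_card_stab v : p %| #|'C_G[v | 'P]|.
Proof. by have [w /card_stab_vertex ->] := neighbour_exists v; apply: dvdn_mulr. Qed.

Hypothesis p2_ndvd_G : ~~ (p ^ 2 %| #|G|).

Lemma prime_ndvd_card_arc_stab v w : e v w -> ~~ (p %| #|'C_('C_G[v | 'P])[w | 'P]|).
Proof.
move=> evw; apply: contra p2_ndvd_G => p_dvd.
apply: dvdn_trans (cardSg (subsetIl G 'C[v | 'P])).
by rewrite (card_stab_vertex evw) expnS expn1 dvdn_pmul2l ?prime_gt0.
Qed.

Lemma prime_elt_fixes_vertex x : x \in G -> #[x] = p -> exists v, x v = v.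
Proof.
move=> xG ox; have [v0 _ | T0] := pickP (@predT T); last first.
  suff x1 : x = 1 by move: ox; rewrite x1 order1 => p1; move: p_pr; rewrite -p1.
  by apply/permP => v; have := T0 v.
have [y yGv0 oy] := Cauchy p_pr (prime_dvd_card_stab v0).
have /setIP[yG _] := yGv0.
have sylY : p.-Sylow(G) <[y]>.
  rewrite /pHall cycle_subG yG /pgroup -orderE oy pnat_id //= p'natE //.
  apply: contra p2_ndvd_G => p_dvd.
  rewrite -(Lagrange (_ : <[y]> \subset G)) ?cycle_subG // -orderE oy.
  by rewrite expnS expn1 dvdn_pmul2l ?prime_gt0.
have [z zG] : exists2 z, z \in G & <[x]> \subset <[y]> :^ z.
  by apply: Sylow_subJ sylY _ _; rewrite ?cycle_subG // /pgroup -orderE ox pnat_id.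
rewrite cycle_subG => /imsetP[x' /cycleP[k ->] ->]; exists (z v0).
have /setIP[_ /astab1P] := groupX k yGv0; rewrite /= apermE => ykv0.
by rewrite conjgE !permM permK ykv0.
Qed.

End ArcTransitiveGraph.

Section Representation.
Variables (F : finFieldType) (p : nat) (T : finType) (e : rel T) (G : {group {perm T}}).
Variables (D : {group {'GL_2[F]}}) (rho : {morphism D >-> {perm T}}).
Hypotheses (p_pr : prime p) (card_F : #|F| = p) (e_reg : regular_of_valency e p).
Hypotheses (G_aut : is_aut_group e G) (G_arc : arc_transitive e G).
Hypotheses (im_rho : rho @* D = G) (unip_in : forall t, unip t \in D).
Hypothesis unip1_ker : unip 1%R \notin 'ker rho.

Lemma rho_in_G g : g \in D -> rho g \in G.
Proof. by move=> gD; rewrite -im_rho mem_morphim. Qed.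

Lemma p2_ndvd_card_G : ~~ (p ^ 2 %| #|G|).
Proof.
have dvdG : #|G| %| #|'GL_2[F]|.
  by rewrite -im_rho (dvdn_trans (dvdn_morphim rho D)) ?cardSg ?subsetT.
apply: contra (prime_sqr_ndvd_card_GL2 p_pr) => /dvdn_trans/(_ dvdG).
by rewrite card_GL_2 card_F.
Qed.

Lemma order_rho_unip1 : #[rho (unip 1%R)] = p.
Proof.
apply/(prime_nt_dvdP p_pr).
  by rewrite order_eq1; apply: contraNneq unip1_ker => /(kerP _ (unip_in _)).
by rewrite order_dvdn -morphX // unipX (pcharf0 (prime_card_pchar p_pr card_F)) unip0 morph1.
Qed.

Lemma unip_fixed_vertex : exists v, forall t, rho (unip t) v = v.
Proof.
have [v piv] := prime_elt_fixes_vertex p_pr e_reg G_aut G_arc p2_ndvd_card_G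
  (rho_in_G (unip_in _)) order_rho_unip1.
exists v => t; have [n ->] := prime_field_natr p_pr card_F t.
rewrite -unipX morphX //.
have : rho (unip 1%R) \in 'C[v | 'P] by apply/astab1P; rewrite /= apermE.
by move/(groupX n)/astab1P; rewrite /= apermE.
Qed.

Lemma move_lifts v w : exists2 g, g \in D & rho g v = w.
Proof.
have [x xG xv] := vertex_transitive p_pr e_reg G_arc v w.
by move: xG; rewrite -im_rho => /morphimP[g _ gD xE]; exists g; rewrite -?xE.
Qed.

Lemma upper_move_not_adjacent v g a b d : (forall t, rho (unip t) v = v) ->
  g \in D -> GLval g = mx22 a b 0 d -> ~~ e v (rho g v).
Proof.
move=> Uv gD gE; apply/negP => evw.
have dn0 : (d != 0)%R.
  by have := GL_det g; rewrite gE det_mx22 mulr0 subr0 mulf_eq0 negb_or => /andP[].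
have Uw : rho (unip 1%R) (rho g v) = rho g v.
  by rewrite -permM -morphM // (upper_GL2_unip gE dn0) morphM // permM Uv.
have /negP[] := prime_ndvd_card_arc_stab p_pr e_reg G_aut G_arc p2_ndvd_card_G evw.
rewrite -order_rho_unip1 order_dvdG //.
apply/setIP; split; first (apply/setIP; split; first exact: rho_in_G).
  by apply/astab1P; rewrite /= apermE.
by apply/astab1P; rewrite /= apermE.
Qed.

Lemma triangle_of_det1_move v g : (forall t, rho (unip t) v = v) ->
  g \in D -> (\det (GLval g) = 1)%R -> e v (rho g v) -> has_triangle e.
Proof.
move=> Uv gD; set w := rho g v => detg evw.
have rhoE h x y : h \in D -> e (rho h x) (rho h y) = e x y.
  by move=> hD; apply: G_aut; apply: rho_in_G.
have [a [b [c [d gE]]]] := mx22P (GLval g); rewrite gE det_mx22 in detg.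
have [c0 | cn0] := eqVneq c 0%R.
  by move: gE; rewrite c0 => /(upper_move_not_adjacent Uv gD); rewrite evw.
have gB : g * unip (- c^-1)%R = unip (c^-1)%R * g * unip ((1 - a - d) / c)%R * g.
  exact: GL2_bruhat gE cn0 detg.
(* (w, u w) is the image under g of the arc (v, u'' w) = u'' (v, w). *)
exists v, w, (rho (unip (- c^-1)%R) w); rewrite evw /=; apply/andP; split.
  rewrite {1}/w -permM -morphM // gB !morphM ?groupM // !permM Uv.
  by rewrite rhoE // -{1}(Uv ((1 - a - d) / c)%R) rhoE.
by rewrite -{1}(Uv (- c^-1)%R) rhoE.
Qed.

Lemma triangle_of_det1_lifts :
  (forall v g, (forall t, rho (unip t) v = v) -> g \in D ->
     exists2 g', g' \in D & (\det (GLval g') = 1)%R /\ rho g' v = rho g v) ->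
  has_triangle e.
Proof.
move=> det1_lift; have [v Uv] := unip_fixed_vertex.
have [w evw] := neighbour_exists p_pr e_reg v.
have [g gD gv] := move_lifts v w; have [g' g'D [detg' g'v]] := det1_lift v g Uv gD.
by apply: (triangle_of_det1_move Uv g'D detg'); rewrite g'v gv.
Qed.

End Representation.

Lemma PSL2_triangle p (T : finType) (e : rel T) (G : {group {perm T}}) :
  prime p -> regular_of_valency e p -> is_aut_group e G -> arc_transitive e G ->
  G \isog PSL2 p -> has_triangle e.
Proof.
move=> p_pr e_reg G_aut G_arc isoG.
have [rho [im_rho ker_rho]] := isog_quotient_morphism (center_normal (SL2_group p)) isoG.
have unip1_ker : unip 1%R \notin 'ker rho by rewrite ker_rho unip1_notin_center ?lunip_SL2.
apply: (triangle_of_det1_lifts p_pr (card_Fp p_pr) e_reg G_aut G_arc im_rho (@unip_SL2 p)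
  unip1_ker).
by move=> v g _ gD; exists g => //; split=> //; move: gD; rewrite inE => /eqP.
Qed.

Section ProjectiveRep.
Variables (F : finFieldType) (T : finType) (rho : {morphism 'GL_2[F] >-> {perm T}}).
Hypothesis ker_rho : 'ker rho = 'Z('GL_2[F]).

Lemma rho_scalGL (a : F) : (a != 0)%R -> rho (scalGL a) = 1.
Proof. by move=> an0; apply: mker; rewrite ker_rho scalGL_center. Qed.

Lemma rho_eq1_scalar g : rho g = 1 -> exists2 a : F, (a != 0)%R & g = scalGL a.
Proof.
move/(kerP _ (in_GL2 g)); rewrite ker_rho => gZ.
exact: center_GL2_scalar (in_GL2 _) (in_GL2 _) gZ.
Qed.

Lemma det_normalizing_involution b :
  rho b \in 'N(<[rho (unip 1%R)]>) -> #[rho b] = 2 ->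
  exists2 a : F, (a != 0)%R & (\det (GLval b) = - a ^+ 2)%R.
Proof.
move=> bN ob; have : rho (unip 1%R) ^ rho b \in <[rho (unip 1%R)]>.
  by rewrite memJ_norm // cycle_id.
case/cycleP => k; rewrite -(morphJ rho (in_GL2 _) (in_GL2 _)) -(morphX rho k (in_GL2 _)).
move/(rcoset_kerP _ (in_GL2 _) (in_GL2 _)); rewrite ker_rho => /rcosetP[z zZ conj_u].
have [l ln0 zE] := center_GL2_scalar (in_GL2 _) (in_GL2 _) zZ.
have [a [b' [c [d bE]]]] := mx22P (GLval b).
have c0 : c = 0%R.
  have := congr1 (@GLval 2 _) (conjgC (unip 1%R) b).
  by rewrite conj_u zE unipX !GL_MxE !unipE bE scalGLE // => /mx22_normalizing_unip_upper.
have := GL_det b; rewrite bE c0 det_mx22 mulr0 subr0 mulf_eq0 negb_or => /andP[an0 dn0].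
have := expg_order (rho b); rewrite ob -(morphX rho 2 (in_GL2 b)) => /rho_eq1_scalar[l' l'n0].
move/(congr1 (@GLval 2 _)); rewrite expgS expg1 GL_MxE bE c0 scalGLE //.
case/upper_mx22_sqr_scalar => [[b'0 da] | ->].
  have : b = scalGL a by apply: GLval_inj; rewrite bE scalGLE // b'0 c0 da.
  by move=> bE'; move: ob; rewrite bE' rho_scalGL // order1.
by exists a; rewrite // mulrN expr2.
Qed.

End ProjectiveRep.

Section PGL2.
Variables (F : finFieldType) (p s : nat) (T : finType) (e : rel T) (G : {group {perm T}}).
Variable rho : {morphism 'GL_2[F] >-> {perm T}}.
Hypotheses (p_pr : prime p) (card_F : #|F| = p) (e_reg : regular_of_valency e p).
Hypotheses (G_aut : is_aut_group e G) (G_arc : arc_transitive e G).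
Hypotheses (im_rho : rho @* 'GL_2[F] = G) (ker_rho : 'ker rho = 'Z('GL_2[F])).
Hypotheses (p_mod4 : p %% 4 = 3) (s_lt : (2 * s < p)%N)
  (card_T : (#|T| * (2 * s) = p ^ 2 - 1)%N).

Let unip1_ker : unip 1%R \notin 'ker rho.
Proof. by rewrite ker_rho unip1_notin_center ?inE. Qed.

Local Notation pi := (rho (unip 1%R)).

Lemma card_stab_PGL2 v : #|'C_G[v | 'P]| = (2 * s * p)%N.
Proof.
have card_G : #|G| = (p * (p ^ 2 - 1))%N.
  by rewrite -im_rho card_morphim setIid ker_rho card_PGL2 card_F.
have orbitT : orbit 'P G v = [set: T].
  apply/setP => w; rewrite inE; apply/orbitP.
  by have [x xG xv] := vertex_transitive p_pr e_reg G_arc v w; exists x.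
have := Lagrange (subsetIl G 'C[v | 'P]).
rewrite -card_orbit orbitT cardsT card_G -card_T => eq.
have T_gt0 : 0 < #|T| by apply/card_gt0P; exists v.
by apply/eqP; rewrite -(eqn_pmul2r T_gt0) eq; apply/eqP; ring.
Qed.

Lemma rho_unip_normal_stab v : (forall t, rho (unip t) v = v) ->
  'C_G[v | 'P] \subset 'N(<[pi]>).
Proof.
move=> Uv.
have opi : #[pi] = p := order_rho_unip1 p_pr card_F (fun t => in_GL2 (unip t)) unip1_ker.
have piGv : pi \in 'C_G[v | 'P].
  apply/setIP; split; first by rewrite -im_rho mem_morphim ?inE.
  by apply/astab1P; rewrite /= apermE Uv.
have s_gt0 : 0 < s.
  rewrite lt0n; apply/eqP => s0; move: card_T; rewrite s0 muln0.
  by have := prime_gt1 p_pr; nia.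
have index_pi : #|'C_G[v | 'P] : <[pi]>| = (2 * s)%N.
  have := Lagrange (_ : <[pi]> \subset 'C_G[v | 'P]); rewrite cycle_subG => /(_ piGv).
  by rewrite card_stab_PGL2 -orderE opi mulnC => /eqP; rewrite eqn_pmul2r ?prime_gt0 // => /eqP.
have sylP : p.-Sylow('C_G[v | 'P]) <[pi]>.
  rewrite /pHall cycle_subG piGv /pgroup -orderE opi pnat_id //= p'natE // index_pi.
  by rewrite gtnNdvd ?muln_gt0.
by apply/normal_norm/(Sylow_normal_of_index_lt p_pr sylP); rewrite index_pi.
Qed.

Lemma PGL2_det1_lift v g : (forall t, rho (unip t) v = v) ->
  exists2 g', g' \in 'GL_2[F] & (\det (GLval g') = 1)%R /\ rho g' v = rho g v.
Proof.
move=> Uv; have two_dvd : 2 %| #|'C_G[v | 'P]| by rewrite card_stab_PGL2 -mulnA dvdn_mulr.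
have [iota iGv oi] := Cauchy (isT : prime 2) two_dvd.
have /setIP[iG /astab1P iv] := iGv; rewrite /= apermE in iv.
move: iG; rewrite -im_rho => /morphimP[b _ _ rb].
have bN : rho b \in 'N(<[pi]>) by rewrite -rb (subsetP (rho_unip_normal_stab Uv)).
have ob : #[rho b] = 2 by rewrite -rb.
have [a an0 detb] := det_normalizing_involution ker_rho bN ob.
have bv : rho b v = v by rewrite -rb.
have F_mod4 : #|F| %% 4 = 3 by rewrite card_F.
have [x detE] := sqr_or_opp_sqr (\det (GLval g))%R F_mod4.
have xn0 : (x != 0)%R.
  apply: contraNneq (GL_det g) => x0.
  by case: detE; rewrite x0 expr0n /= => /eqP; rewrite ?oppr_eq0.
case: detE => detE.
  exists (g * scalGL x^-1%R); first exact: in_GL2.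
  rewrite GL_MxE det_mulmx det_scalGL ?invr_eq0 // detE exprVn mulfV ?expf_neq0 //.
  by rewrite morphM ?in_GL2 // rho_scalGL ?invr_eq0 // mulg1.
exists (b * g * scalGL (x * a)^-1%R); first exact: in_GL2.
rewrite !GL_MxE !det_mulmx det_scalGL ?invr_eq0 ?mulf_neq0 // detb -[(\det _)%R]opprK detE.
split; first by field; rewrite an0 xn0.
by rewrite !morphM ?in_GL2 // rho_scalGL ?invr_eq0 ?mulf_neq0 // mulg1 permM bv.
Qed.

Lemma PGL2_rep_triangle : has_triangle e.
Proof.
apply: (triangle_of_det1_lifts p_pr card_F e_reg G_aut G_arc im_rho (fun t => in_GL2 (unip t))
  unip1_ker).
by move=> v g Uv _; apply: PGL2_det1_lift.
Qed.

End PGL2.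

Lemma PGL2_triangle p s (T : finType) (e : rel T) (G : {group {perm T}}) :
  prime p -> regular_of_valency e p -> is_aut_group e G -> arc_transitive e G ->
  p %% 4 = 3 -> (2 * s < p)%N -> (#|T| * (2 * s) = p ^ 2 - 1)%N ->
  G \isog PGL2 p -> has_triangle e.
Proof.
move=> p_pr e_reg G_aut G_arc p_mod4 s_lt card_T isoG.
have [rho [im_rho ker_rho]] := isog_quotient_morphism (center_normal _) isoG.
exact: PGL2_rep_triangle p_pr (card_Fp p_pr) e_reg G_aut G_arc im_rho ker_rho p_mod4 s_lt
  card_T.
Qed.


Lemma complete_graph_triangle (T : finType) (e : rel T) n :
  is_complete_graph e n -> 2 < n -> has_triangle e.
Proof.
case=> card_T e_complete; rewrite -card_T => /card_gt2P[x [y [z [_ [xy yz zx]]]]].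
by exists x, y, z; rewrite !e_complete // eq_sym.
Qed.

Theorem lemma3p3 (p : nat) (T : finType) (e : rel T) (G : {group {perm T}}) :
  prime p ->
  symmetric e -> irreflexive e ->
  connected_graph e ->
  regular_of_valency e p ->
  is_aut_group e G ->
  arc_transitive e G ->
  quasiprimitive G \/ biquasiprimitive G ->
  (   (is_complete_graph e 12 /\ (G \isog M11) /\ p = 11)
   \/ (exists s : nat,
         mersenne_prime p /\
         (prod_distinct_primes ((p - 1) %/ 2) %| s)%N /\ (s %| (p - 1) %/ 2)%N /\ (s < (p - 1) %/ 2)%N /\
         #|T| = ((p ^ 2 - 1) %/ (2 * s))%N /\
         ((G \isog PSL2 p) \/ (G \isog PGL2 p)))) ->
  has_triangle e.
Proof.
move=> p_pr _ _ _ e_reg G_aut G_arc _.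
case=> [[K12 _] | [s [mersenne_p [_ [s_dvd [s_lt [card_T [isoG | isoG]]]]]]]].
- exact: complete_graph_triangle K12 _.
- exact: PSL2_triangle p_pr e_reg G_aut G_arc isoG.
- have p_mod4 := mersenne_mod4 mersenne_p.
  have s_lt' : (2 * s < p)%N by lia.
  have card_T' : (#|T| * (2 * s) = p ^ 2 - 1)%N.
    by rewrite card_T divnK // dvdn_double_sqr_pred //; lia.
  exact: PGL2_triangle p_pr e_reg G_aut G_arc p_mod4 s_lt' card_T' isoG.
Qed.
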